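(* Let $D$ be a digraph. (1) If for every integer $k\geq3$ there is a colouring of the vertices of $D$ with countably many colours admitting no monochromatic copy of $\vec C_k$, then $\chi(D)\leq 2^{\omega}$. (2) The arc set of $D$ can be partitioned into two sets $E_0,E_1$ such that neither $(V(D),E_0)$ nor $(V(D),E_1)$ contains a directed cycle.
   Context: A digraph is a pair $D=(V,E)$ with $E\subseteq V^2$ such that $uv\in E$ implies $vu\notin E$. $\vec C_k$ is the directed cycle on $k$ vertices. The dichromatic number $\chi(D)$ is the minimal number of acyclic vertex sets (sets inducing no directed cycle) covering $V(D)$. *)

From mathcomp Require Import all_boot.
Set Implicit Arguments. Unset Strict Implicit. Unset Printing Implicit Defensive.

Definition is_digraph (V : Type) (E : V -> V -> Prop) : Prop :=
  forall u v, E u v -> ~ E v u.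

Definition cycle_copy_in (V : Type) (E : V -> V -> Prop) (A : V -> Prop)
  (k : nat) : Prop :=
  exists f : nat -> V,
    (forall i j, i < k -> j < k -> f i = f j -> i = j) /\
    (forall i, i < k -> A (f i)) /\
    (forall i, i < k -> E (f i) (f (i.+1 %% k))).

(* A contains a directed cycle (length >= 2; in a digraph every cycle has
   length >= 3 anyway). *)
Definition has_dicycle (V : Type) (E : V -> V -> Prop) (A : V -> Prop) : Prop :=
  exists k, 2 <= k /\ cycle_copy_in E A k.

Definition acyclic_set (V : Type) (E : V -> V -> Prop) (A : V -> Prop) : Prop :=
  ~ has_dicycle E A.

(* chi(D) <= 2^omega: V can be covered by acyclic sets indexed by a set of
   size continuum, here nat -> bool. *)
Definition dichromatic_le_continuum (V : Type) (E : V -> V -> Prop) : Prop :=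
  exists c : V -> (nat -> bool), forall col, acyclic_set E (fun v => c v = col).

Definition no_mono_Ck (V : Type) (E : V -> V -> Prop) (c : V -> nat) (k : nat) : Prop :=
  forall col, ~ cycle_copy_in E (fun v => c v = col) k.

From mathcomp Require Import all_boot.
From mathcomp Require Import boolp wochoice.
From Stdlib Require Cantor.

Set Implicit Arguments.
Unset Strict Implicit.
Unset Printing Implicit Defensive.

(* (1) Merge the countable colourings c_k into the single colouring
   v |-> (k, i) |-> [c_k v == i] with continuum many colours.  A class of it
   lies inside a class of every c_k, so it contains no C_k for k >= 3, and
   a digraph has no C_2.
   (2) Well-order the vertices and split the arcs into forward and backward
   ones.  On a directed cycle, the arc entering its least vertex is backward
   and the arc leaving it is forward, so neither class contains a cycle. *)

Section Colourings.

Variables (V : Type) (E : V -> V -> Prop).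

Lemma digraph_no_cycle_copy2 (A : V -> Prop) :
  is_digraph E -> ~ cycle_copy_in E A 2.
Proof.
move=> HD [f [_ [_ fE]]].
have e01 := fE 0 isT; have e10 := fE 1 isT.
by rewrite /= modnn in e10; exact: HD _ _ e01 e10.
Qed.

Lemma no_mono_Ck_refine (U : Type) (c : V -> nat) (c' : V -> U) k :
  0 < k -> (forall u v, c' u = c' v -> c u = c v) ->
  no_mono_Ck E c k -> forall col, ~ cycle_copy_in E (fun v => c' v = col) k.
Proof.
move=> k0 refine noCk col [f [finj [fcol fE]]].
apply: (noCk (c (f 0))); exists f; split=> //; split=> // i ik.
by apply: refine; rewrite (fcol i ik) (fcol 0 k0).
Qed.

Definition pair_code (c : nat -> V -> nat) (v : V) : nat -> bool :=
  fun n => c (Cantor.of_nat n).1 v == (Cantor.of_nat n).2.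

Lemma pair_code_eq (c : nat -> V -> nat) k u v :
  pair_code c u = pair_code c v -> c k u = c k v.
Proof.
move=> /(congr1 (fun g => g (Cantor.to_nat (k, c k u)))).
by rewrite /pair_code Cantor.cancel_of_to /= eqxx => /esym/eqP.
Qed.

Lemma dichromatic_le_continuum_of_colourings (c : nat -> V -> nat) :
  is_digraph E -> (forall k, 3 <= k -> no_mono_Ck E (c k) k) ->
  dichromatic_le_continuum E.
Proof.
move=> HD noCk; exists (pair_code c) => col [k [k2 cyc]].
case: (ltngtP k 2) => [|k3|k_eq2]; first by rewrite ltnNge k2.
- exact: no_mono_Ck_refine (ltnW (ltnW k3)) (@pair_code_eq c k) (noCk k k3) _ cyc.
- by move: cyc; rewrite k_eq2; exact: digraph_no_cycle_copy2.
Qed.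

End Colourings.

Lemma cycle_predecessor k j : j < k -> exists2 i, i < k & i.+1 %% k = j.
Proof.
case: j => [|j] jk.
  by exists k.-1; rewrite ?prednK ?modnn // ?ltn_predL; apply: leq_ltn_trans jk.
by exists j; [apply: ltnW | rewrite modn_small].
Qed.

Lemma well_order_antisymmetric (T : eqType) (R : rel T) :
  well_order R -> antisymmetric R.
Proof.
move=> Rwo x y; apply: (@wo_chain_antisymmetric T R predT) => //.
by move=> A _; apply: Rwo.
Qed.

Lemma well_order_least_on_prefix (T : eqType) (R : rel T) (f : nat -> T) k :
  well_order R -> 0 < k -> exists2 j, j < k & forall i, i < k -> R (f j) (f i).
Proof.
move=> Rwo k0; pose A := [mem [seq f i | i <- iota 0 k]].
have [|z [[Az zmin] _]] := Rwo A.
  by exists (f 0); apply: map_f; rewrite mem_iota.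
move: Az zmin => /mapP[j + ->]; rewrite mem_iota add0n => jk zmin.
by exists j => // i ik; apply: zmin; apply: map_f; rewrite mem_iota.
Qed.

Section ArcSplitting.

Variables (V : Type) (E : V -> V -> Prop) (R : rel V).
Hypothesis R_antisym : antisymmetric R.
Hypothesis R_least_on_prefix : forall (f : nat -> V) k,
  0 < k -> exists2 j, j < k & forall i, i < k -> R (f j) (f i).

Definition forward_arcs (u v : V) : Prop := E u v /\ R u v.
Definition backward_arcs (u v : V) : Prop := E u v /\ ~~ R u v.

Lemma arcs_forward_or_backward u v :
  E u v <-> forward_arcs u v \/ backward_arcs u v.
Proof. by rewrite /forward_arcs /backward_arcs; case: (R u v); intuition. Qed.

Lemma forward_backward_disjoint u v : ~ (forward_arcs u v /\ backward_arcs u v).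
Proof. by move=> [[_ Ruv] [_ /negP]]. Qed.

Lemma forward_arcs_acyclic :
  is_digraph E -> ~ has_dicycle forward_arcs (fun _ => True).
Proof.
move=> HD [k [k2 [f [_ [_ fE]]]]].
have [j jk jmin] := R_least_on_prefix f (ltnW k2).
have [i ik ij] := cycle_predecessor jk.
have [e r] := fE i ik; rewrite ij in e r.
have fij : f i = f j by apply: R_antisym; rewrite r jmin.
by rewrite fij in e; exact: (HD _ _ e e).
Qed.

Lemma backward_arcs_acyclic : ~ has_dicycle backward_arcs (fun _ => True).
Proof.
move=> [k [k2 [f [_ [_ fE]]]]].
have [j jk jmin] := R_least_on_prefix f (ltnW k2).
have [_ r] := fE j jk.
by rewrite jmin ?ltn_pmod // ltnW in r.
Qed.

End ArcSplitting.

Theorem mainTheorem19 (V : Type) (E : V -> V -> Prop) (HD : is_digraph E) :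
  ((forall k : nat, 3 <= k -> exists c : V -> nat, no_mono_Ck E c k) ->
     dichromatic_le_continuum E)
  /\
  (exists E0 E1 : V -> V -> Prop,
     (forall u v, E u v <-> (E0 u v \/ E1 u v)) /\
     (forall u v, ~ (E0 u v /\ E1 u v)) /\
     ~ has_dicycle E0 (fun _ => True) /\
     ~ has_dicycle E1 (fun _ => True)).
Proof.
split.
- move=> colourings.
  have [c noCk] : {c : nat -> V -> nat & forall k, 3 <= k -> no_mono_Ck E (c k) k}.
    apply: (@choice _ _ (fun k c => 3 <= k -> no_mono_Ck E c k)) => k.
    have [k3|_] := boolP (3 <= k).
      by have [c noCk] := colourings k k3; exists c.
    by exists (fun _ => 0).
  exact: dichromatic_le_continuum_of_colourings noCk.
- have [R Rwo] := well_ordering_principle {classic V}.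
  have R_antisym := well_order_antisymmetric Rwo.
  have R_least f k := @well_order_least_on_prefix _ R f k Rwo.
  exists (forward_arcs E R), (backward_arcs E R).
  split; first exact: arcs_forward_or_backward.
  split; first exact: forward_backward_disjoint.
  split; [exact: forward_arcs_acyclic | exact: backward_arcs_acyclic].
Qed.
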